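(* For any integers $n\ge3$ and $1\le m\le(n-1)^2$, letting $d_n$ denote the in-degree of vertex $n$ in $\mathbb G(n,m)$, the graph $\mathbb G(n-1,m-d_n)$ is well defined and equals the subgraph of $\mathbb G(n,m)$ induced by the vertex subset $\{1,\dots,n-1\}$.
   Context: For integers $n\ge2$ and $0\le m\le n(n-1)$, $\mathbb G(n,m)$ is the simple directed graph on vertex set $\{1,\dots,n\}$ whose arc set is $\{(\lceil \frac{i}{n-1}\rceil,\ n-((i-1)\bmod n)) : i=1,\dots,m\}$, where an arc $(j,k)$ goes from $j$ to $k$ and $a\bmod b\in\{0,\dots,b-1\}$; these $m$ pairs are pairwise distinct pairs of distinct vertices. The subgraph induced by a vertex subset $S$ has vertex set $S$ and all arcs of the graph with both endpoints in $S$. *)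

From mathcomp Require Import all_boot.
Set Implicit Arguments. Unset Strict Implicit. Unset Printing Implicit Defensive.

Definition ceil_div (a b : nat) : nat := (a + b.-1) %/ b.

Definition Garc (n i : nat) : nat * nat :=
  (ceil_div i n.-1, n - (i.-1 %% n)).

(* Arc list of G(n,m) (vertex set is {1,...,n}). *)
Definition Garcs (n m : nat) : seq (nat * nat) := [seq Garc n i | i <- iota 1 m].

Definition G_well_defined (n m : nat) : Prop := 2 <= n /\ m <= n * n.-1.

Definition indeg (n m v : nat) : nat := count (fun a => a.2 == v) (Garcs n m).

Definition induced_arc (n m k : nat) (a : nat * nat) : bool :=
  [&& a \in Garcs n m, 1 <= a.1 <= k & 1 <= a.2 <= k].

From mathcomp Require Import all_boot zify.

(* Write n = N + 1. Arc i of G(n, _) has head n exactly when n divides i - 1, so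
   d_n = ceil(m / n).  Every other arc has index i = q n + r + 1 with 0 < r <= N and is
   preceded by exactly q + 1 arcs with head n; it coincides with arc q N + r of G(N, _):
   both have head n - r, and both have tail q + 1 or q + 2 according as q + r < N or not,
   which needs q + r <= 2(N - 1), a consequence of m <= N^2.  The same bound keeps all
   tails of G(n, m) in {1, ..., N}, so the arcs avoiding head n are exactly the arcs of
   the subgraph induced by {1, ..., N}. *)

Lemma ceil_div_leq a b c : 0 < b -> (ceil_div a b <= c) = (a <= c * b).
Proof. by move=> b_gt0; rewrite /ceil_div -ltnS ltn_divLR // mulSn; lia. Qed.

Lemma ceil_div_eq a b c : 0 < b -> c * b < a <= c.+1 * b -> ceil_div a b = c.+1.
Proof.
move=> b_gt0 /andP[lt_a le_a]; apply/eqP.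
by rewrite eqn_leq ceil_div_leq // ltnNge ceil_div_leq // -ltnNge lt_a le_a.
Qed.

Lemma ceil_divS a b : 0 < b -> ceil_div a.+1 b = ceil_div a b + (b %| a).
Proof.
move=> b_gt0; rewrite /ceil_div addSn divnS // addnC.
by rewrite -addnS prednK // dvdn_addl.
Qed.

Lemma GarcsS n m : Garcs n m.+1 = rcons (Garcs n m) (Garc n m.+1).
Proof. by rewrite /Garcs -[m.+1]addn1 iotaD map_cat /= cats1 (addnC 1). Qed.

Lemma indegS n m v : indeg n m.+1 v = indeg n m v + ((Garc n m.+1).2 == v).
Proof. by rewrite /indeg GarcsS -cats1 count_cat /= addn0. Qed.

Lemma Garc_head_eq n i : 0 < n -> ((Garc n i).2 == n) = (n %| i.-1).
Proof. by move=> n_gt0; rewrite /dvdn /=; have := ltn_pmod i.-1 n_gt0; lia. Qed.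

Lemma indeg_last n m : 0 < n -> indeg n m n = ceil_div m n.
Proof.
move=> n_gt0; elim: m => [|m IH]; first by rewrite /ceil_div divn_small // prednK.
by rewrite indegS IH Garc_head_eq // ceil_divS.
Qed.

Lemma Garc_shift N q r : 0 < r <= N -> q + r <= N.-1.*2 ->
  Garc N.+1 (q * N.+1 + r).+1 = Garc N (q * N + r).
Proof.
case: r => // r /= r_lt qr_le; rewrite /Garc /=; congr pair.
- have N1_gt0 : 0 < N.-1 by lia.
  have [small|large] := ltnP (q + r.+1) N.
    by rewrite !(@ceil_div_eq _ _ q) //; nia.
  by rewrite !(@ceil_div_eq _ _ q.+1) //; nia.
- rewrite [in RHS]addnS /= !modnMDl !modn_small //; lia.
Qed.

Lemma filter_Garcs N m : m <= N ^ 2 ->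
  [seq a <- Garcs N.+1 m | a.2 != N.+1] = Garcs N (m - indeg N.+1 m N.+1).
Proof.
elim: m => [|m IH] mN //; rewrite GarcsS filter_rcons indegS IH ?(ltnW mN) //.
rewrite Garc_head_eq //=; have [dvd_m|ndvd_m] /= := boolP (N.+1 %| m).
  by rewrite addn1 subSS.
rewrite addn0 indeg_last //.
have r_gt0 : 0 < m %% N.+1 by rewrite lt0n -/(dvdn _ _).
set q := m %/ N.+1; set r := m %% N.+1; have m_eq : m = q * N.+1 + r := divn_eq m N.+1.
have r_lt : r < N.+1 by rewrite ltn_pmod.
have -> : ceil_div m N.+1 = q.+1 by apply: ceil_div_eq => //; lia.
rewrite subSS (_ : m - q = (m - q.+1).+1) ?GarcsS; last by lia.
congr rcons; have -> : (m - q.+1).+1 = q * N + r by lia.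
rewrite m_eq Garc_shift //; nia.
Qed.

Lemma mem_Garcs_bounds N m a : m <= N ^ 2 -> a \in Garcs N.+1 m ->
  (0 < a.1 <= N) && (0 < a.2 <= N.+1).
Proof.
move=> mN /mapP[i]; rewrite mem_iota => /andP[i_gt0 i_lt] ->{a} /=.
have N_gt0 : 0 < N by nia.
rewrite -[0 < _]negbK -leqNgt !ceil_div_leq //; have := ltn_pmod i.-1 (ltn0Sn N); nia.
Qed.

Lemma induced_arcE N m a : m <= N ^ 2 ->
  induced_arc N.+1 m N a = (a \in Garcs N.+1 m) && (a.2 != N.+1).
Proof.
rewrite /induced_arc => mN; have [a_in|] //= := boolP (a \in Garcs N.+1 m).
by have := mem_Garcs_bounds _ _ _ mN a_in; case: a {a_in} => x y /=; lia.
Qed.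

Lemma subn_ceil_div_le N m : m <= N ^ 2 -> m - ceil_div m N.+1 <= N * N.-1.
Proof.
move=> mN; have m_le : m <= ceil_div m N.+1 * N.+1 by rewrite -ceil_div_leq.
have c_le : ceil_div m N.+1 <= N by rewrite ceil_div_leq //; nia.
nia.
Qed.

Theorem lemma16 (n m : nat) :
  3 <= n -> 1 <= m <= n.-1 ^ 2 ->
  let d := indeg n m n in
  [/\ d <= m,
      G_well_defined n.-1 (m - d)
    & forall a : nat * nat, (a \in Garcs n.-1 (m - d)) = induced_arc n m n.-1 a].
Proof.
case: n => [|N] //= N_ge2 /andP[_ mN]; split.
- by rewrite /indeg (leq_trans (count_size _ _)) // size_map size_iota.
- by split; rewrite // indeg_last // subn_ceil_div_le.
- by move=> a; rewrite -filter_Garcs // mem_filter andbC induced_arcE.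
Qed.
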